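(* Let $G\subset\mathbb{R}^n$ be a compact set of positive Lebesgue measure with empty interior, and let $w_G(x)=1$ for $x\in G$ and $w_G(x)=2$ for $x\in\mathbb{R}^n\setminus G$. Then the Banach function space $L^\infty(\mathbb{R}^n,w_G)$ does not satisfy the bounded $L^2$-approximation property.
   Context: $L^\infty(\mathbb{R}^n,w)$ is the space of measurable $f$ with $\|f\|_{L^\infty(\mathbb{R}^n,w)}:=\|fw\|_{L^\infty(\mathbb{R}^n)}<\infty$. A Banach function space $X$ of functions on $\mathbb{R}^n$ has the bounded $L^2$-approximation property if for every $u\in L^2(\mathbb{R}^n)\cap X$ there is a sequence $u_j\in C_0^\infty(\mathbb{R}^n)$ with $\|u-u_j\|_{L^2(\mathbb{R}^n)}\to0$ and $\limsup_j\|u_j\|_X\le\|u\|_X$. *)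

From HB Require Import structures.
From mathcomp Require Import all_boot all_order all_algebra.
From mathcomp Require Import all_classical all_reals all_analysis.
Set Implicit Arguments. Unset Strict Implicit. Unset Printing Implicit Defensive.
Import Order.TTheory GRing.Theory Num.Theory.
Import numFieldNormedType.Exports.
Local Open Scope classical_set_scope.
Local Open Scope ring_scope.

(* R^n is modelled by row vectors 'rV[R]_n (normed space, sup norm). *)

Section Rn.
Context {R : realType}.

(* Lebesgue integral of a nonnegative (Borel) function on R^n, computed as the
   iterated one-dimensional Lebesgue integral (Tonelli):
   int_{R^{n+1}} f = int_R dx  int_{R^n} f(x, v) dv. *)
Fixpoint lint (n : nat) : ('rV[R]_n -> \bar R) -> \bar R :=
  match n with
  | 0 => fun f => f 0
  | n'.+1 => fun f =>
      (\int[@lebesgue_measure R]_x lint (fun v : 'rV[R]_n' =>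
            f (row_mx (const_mx x : 'rV[R]_1) v)))%E
  end.

Definition lmeas (n : nat) (A : set 'rV[R]_n) : \bar R :=
  lint (fun x => (\1_A x)%:E).

Definition borel_fun (n : nat) (f : 'rV[R]_n -> R) : Prop :=
  forall B : set R, measurable B ->
    <<s [set U : set 'rV[R]_n | open U] >> (f @^-1` B).

Definition L2norm (n : nat) (f : 'rV[R]_n -> R) : \bar R :=
  poweR (lint (fun x => (`|f x| ^+ 2)%:E)) 2^-1.

Definition inL2 (n : nat) (f : 'rV[R]_n -> R) : Prop :=
  borel_fun f /\ (L2norm f < +oo)%E.

Definition esssup (n : nat) (g : 'rV[R]_n -> R) : \bar R :=
  ereal_inf [set t%:E | t in [set t : R | lmeas [set x | t < `|g x|] = 0%E]].

Definition Linf_w_norm (n : nat) (w : 'rV[R]_n -> R) (f : 'rV[R]_n -> R) :=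
  esssup (fun x => f x * w x).

Definition inLinf_w (n : nat) (w : 'rV[R]_n -> R) (f : 'rV[R]_n -> R) : Prop :=
  borel_fun f /\ (Linf_w_norm w f < +oo)%E.

Fixpoint Ck (n : nat) (k : nat) (f : 'rV[R]_n -> R) : Prop :=
  match k with
  | 0 => continuous f
  | k'.+1 => (forall x, differentiable f x) /\
             (forall v : 'rV[R]_n, Ck k' (fun x => 'D_v f x))
  end.

Definition C0inf (n : nat) (f : 'rV[R]_n -> R) : Prop :=
  (forall k, Ck k f) /\
  exists K : set 'rV[R]_n, compact K /\ forall x, ~ K x -> f x = 0.

Definition bounded_L2_approx (n : nat) (inX : ('rV[R]_n -> R) -> Prop)
    (normX : ('rV[R]_n -> R) -> \bar R) : Prop :=
  forall u, inL2 u -> inX u ->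
    exists uj : nat -> 'rV[R]_n -> R,
      (forall j, C0inf (uj j)) /\
      ((fun j => L2norm (u \- uj j)) @ \oo --> 0%E) /\
      (limn_esup (fun j => normX (uj j)) <= normX u)%E.

Definition wG (n : nat) (G : set 'rV[R]_n) (x : 'rV[R]_n) : R :=
  if x \in G then 1 else 2.

End Rn.

(* Take u = 4 1_G, whose weighted norm is at most 4.  If smooth u_j -> u in L^2
   with limsup ||u_j|| <= 4, then eventually ||u_j|| < 5.  A continuous v with
   ||v||_{w_G} < 5 satisfies |v| <= 5/2 everywhere: otherwise the open set
   {|v| > 5/2} meets the open complement of G (G has empty interior), and on
   that nonempty open set, which has positive measure, w_G = 2 gives
   |v w_G| > 5.  Hence |u - u_j| >= 1 on G, so ||u - u_j||_2 >= |G|^(1/2) > 0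
   for all large j, contradicting L^2 convergence. *)

From HB Require Import structures.
From mathcomp Require Import all_boot all_order all_algebra.
From mathcomp Require Import all_classical all_reals all_analysis.
From mathcomp Require Import measurable_realfun ring lra.
Import Order.TTheory GRing.Theory Num.Theory.
Import numFieldNormedType.Exports.
Local Open Scope classical_set_scope.
Local Open Scope ring_scope.

Section order_topology_cvg.
Context {d} {T : orderTopologicalType d}.

Lemma cvg_lt_near {I : Type} {F : set_system I} {f : I -> T} {l e : T} :
  f @ F --> l -> (l < e)%O -> \forall i \near F, (f i < e)%O.
Proof.
move=> fl le; apply: (fl `]-oo, e[%classic); apply: open_nbhs_nbhs.
by split; [exact: lray_open | rewrite /= in_itv].
Qed.

End order_topology_cvg.

Section limn_esup.
Context {R : realType}.
Local Open Scope ereal_scope.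

Lemma limn_esup_lt_near (u : (\bar R)^nat) (l : \bar R) :
  limn_esup u < l -> \forall n \near \oo, u n < l.
Proof.
rewrite limn_esup_lim => ul.
have cu : esups u @ \oo --> limn (esups u) := @is_cvg_esups R u.
apply: filterS (cvg_lt_near cu ul) => n; apply: le_lt_trans.
by apply: ereal_sup_ubound; exists n => /=.
Qed.

End limn_esup.

(* No measurability is needed: the integral of a nonnegative function is a
   supremum over the simple functions below it. *)
Lemma ge0_le_integralT d (T : measurableType d) {R : realType}
    (mu : {measure set T -> \bar R}) (f g : T -> \bar R) :
  (forall x, (0 <= f x)%E) -> (forall x, (f x <= g x)%E) ->
  (\int[mu]_x f x <= \int[mu]_x g x)%E.
Proof.
move=> f0 fg; have g0 x : (0 <= g x)%E := le_trans (f0 x) (fg x).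
rewrite !ge0_integralTE//; apply: ereal_sup_le => _ [h hf <-].
by exists h => //= x; exact: le_trans (hf x) (fg x).
Qed.

Section lint.
Context {R : realType}.
Local Open Scope ereal_scope.

Lemma lint_ge0 n (f : 'rV[R]_n -> \bar R) : (forall x, 0 <= f x) -> 0 <= lint f.
Proof.
elim: n f => [|n IH] f f0 /=; first exact: f0.
by apply: integral_ge0 => x _; exact: IH.
Qed.

Lemma le_lint n (f g : 'rV[R]_n -> \bar R) :
  (forall x, 0 <= f x) -> (forall x, f x <= g x) -> lint f <= lint g.
Proof.
elim: n f g => [|n IH] f g f0 fg /=; first exact: fg.
by apply: ge0_le_integralT => x; [exact: lint_ge0 | exact: IH].
Qed.

Lemma lint0 n : lint (fun _ : 'rV[R]_n => 0) = 0.
Proof.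
elim: n => [|n IH] //=.
by under eq_fun do rewrite IH; exact: integral0.
Qed.

Lemma lmeas0 n : lmeas (set0 : set 'rV[R]_n) = 0.
Proof.
by rewrite -(lint0 n); congr lint; apply/funext => x; rewrite indicE in_set0.
Qed.

End lint.

Section cube.
Context {R : realType}.

Definition cube {n} (c : 'rV[R]_n) (r : R) : set 'rV[R]_n :=
  [set y | forall j, `|c 0 j - y 0 j| < r].

Lemma cube_row n (c : 'rV[R]_(1 + n)) r a v :
  cube c r (row_mx (const_mx a : 'rV_1) v) <->
  ball (c 0 0) r a /\ cube (rsubmx c) r v.
Proof.
have l0 : lshift n (0 : 'I_1) = 0 :> 'I_(1 + n) by apply/val_inj.
split => [cv | [ca cv] j].
  split; first by have := cv (lshift n 0); rewrite row_mxEl !mxE l0.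
  by move=> j; have := cv (rshift 1 j); rewrite row_mxEr !mxE.
case: (split_ordP j) => j' ->; first by rewrite row_mxEl !mxE (ord1 j') l0.
by rewrite row_mxEr; have := cv j'; rewrite !mxE.
Qed.

Lemma indic_cube_row n (c : 'rV[R]_(1 + n)) r a v :
  \1_(cube c r) (row_mx (const_mx a : 'rV_1) v) =
  \1_(ball (c 0 0) r) a * \1_(cube (rsubmx c) r) v :> R.
Proof.
rewrite !indicE; have [[ca cv]|h] := pselect (ball (c 0 0) r a /\ cube (rsubmx c) r v).
  by rewrite !mem_set ?mulr1 //; exact/cube_row.
rewrite memNset; last by move/cube_row.
have [ca|ca] := pselect (ball (c 0 0) r a); last by rewrite (memNset ca) /= mul0r.
by rewrite (mem_set ca) memNset /= ?mulr0 // => cv; exact: h.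
Qed.

Lemma lint_cube n (c : 'rV[R]_n) r k : 0 < r -> 0 <= k ->
  lint (fun x => (k * \1_(cube c r) x)%:E) = (k * (2 * r) ^+ n)%:E.
Proof.
move=> r0 k0; elim: n c => [|n IH] c /=.
  by rewrite indicE mem_set ?expr0 // => -[].
have slice a : lint (fun v => (k * \1_(cube c r) (row_mx (const_mx a : 'rV_1) v))%:E)
    = ((\1_(ball (c 0 0) r) a)%:E * (k * (2 * r) ^+ n)%:E)%E.
  have [ca|ca] := pselect (ball (c 0 0) r a).
    rewrite indicE mem_set // mul1e -(IH (rsubmx (c : 'rV_(1 + n)))).
    by congr lint; apply/funext => v; rewrite indic_cube_row indicE mem_set // mul1r.
  rewrite indicE memNset // mul0e -(lint0 n); congr lint; apply/funext => v.
  by rewrite indic_cube_row indicE memNset // mul0r mulr0.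
have mB : measurable (ball (c 0 0) r : set R) by exact: measurable_ball.
under eq_fun do rewrite slice.
rewrite ge0_integralZr //; last by rewrite lee_fin mulr_ge0 // exprn_ge0 // mulr_ge0 // ltW.
- rewrite integral_indic // setIT.
  rewrite [X in (X * _)%E](_ : _ = (r *+ 2)%:E); last exact: lebesgue_measure_ball (ltW r0).
  by rewrite -EFinM exprS; congr EFin; ring.
- by apply: measurableT_comp => //; exact: measurable_indic.
Qed.

Lemma cube_sub_ball n (c : 'rV[R]_n) r : 0 < r -> cube c r `<=` ball c r.
Proof. by move=> r0 y cy; split => // i j; rewrite (ord1 i); exact: cy. Qed.

Lemma bounded_sub_cube n (A : set 'rV[R]_n) :
  bounded_set A -> exists2 M, 0 < M & A `<=` cube 0 M.
Proof.
case=> M0 [_ AM]; exists (`|M0| + 2); first by rewrite ltr_wpDl.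
move=> y Ay j; have [_ yM] : ball (0 : 'rV[R]_n) (`|M0| + 2) y.
  rewrite -ball_normE /ball_ /= sub0r normrN.
  apply: (@le_lt_trans _ _ (`|M0| + 1)); last by rewrite ltrD2l ltr1n.
  by apply: AM => //; rewrite ltr_pwDr // ler_norm.
exact: yM 0 j.
Qed.

End cube.

Section measure_facts.
Context {R : realType}.

Lemma le_indic {T : Type} (A B : set T) (x : T) :
  A `<=` B -> \1_A x <= \1_B x :> R.
Proof.
move=> AB; rewrite !indicE; have [Ax|Ax] := pselect (A x).
  by rewrite !mem_set //; exact: AB.
by rewrite memNset.
Qed.

Lemma lmeas_nbhs_gt0 {n} (x : 'rV[R]_n) (S : set 'rV[R]_n) :
  nbhs x S -> (0 < lmeas S)%E.
Proof.
move=> /nbhs_ballP [r r0 xrS].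
apply: (@lt_le_trans _ _ (lint (fun y => (1 * \1_(cube x r) y)%:E))).
  by rewrite lint_cube // lte_fin mul1r exprn_gt0 // mulr_gt0.
apply: le_lint => y; rewrite mul1r lee_fin //.
by apply: le_indic; apply: subset_trans xrS; exact: cube_sub_ball.
Qed.

Lemma lint_bounded_lty {n} {A : set 'rV[R]_n} {f : 'rV[R]_n -> \bar R} (k : R) :
  bounded_set A -> 0 <= k -> (forall x, (0 <= f x)%E) ->
  (forall x, (f x <= (k * \1_A x)%:E)%E) -> (lint f < +oo)%E.
Proof.
move=> /bounded_sub_cube [M M0 AM] k0 f0 fk.
apply: (@le_lt_trans _ _ (lint (fun x => (k * \1_(cube 0 M) x)%:E))).
  apply: le_lint => // x; apply: le_trans (fk x) _.
  by rewrite lee_fin ler_wpM2l //; exact: le_indic.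
by rewrite lint_cube // ltry.
Qed.

Lemma borel_fun_indic {n} (A : set 'rV[R]_n) :
  <<s [set U : set 'rV[R]_n | open U] >> A -> borel_fun (\1_A : _ -> R).
Proof.
move=> mA B _; rewrite preimage_indic.
have := sigma_algebraC (@sigma_algebra0 _ setT [set U : set 'rV[R]_n | open U]).
rewrite setC0 => mT.
by repeat case: ifP => _ //; [exact: sigma_algebraC | exact: (@sigma_algebra0 _ setT)].
Qed.

Lemma borel_fun_comp {n} (g : R -> R) (f : 'rV[R]_n -> R) :
  measurable_fun setT g -> borel_fun f -> borel_fun (g \o f).
Proof.
move=> mg bf B mB; rewrite comp_preimage; apply: bf.
by rewrite -[_ @^-1` _]setTI; exact: mg.
Qed.

End measure_facts.

Section esssup.
Context {R : realType}.

Lemma esssup_le {n} (g : 'rV[R]_n -> R) (t : R) :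
  (forall x, `|g x| <= t) -> (esssup g <= t%:E)%E.
Proof.
move=> gt; apply: ereal_inf_lbound; exists t => //=.
rewrite -(lmeas0 n); congr lmeas; apply/seteqP; split => x //=.
by rewrite ltNge gt.
Qed.

Lemma esssup_ge_nbhs {n} (x : 'rV[R]_n) (g : 'rV[R]_n -> R) (t : R) :
  nbhs x [set y | t < `|g y|] -> (t%:E <= esssup g)%E.
Proof.
move=> xt; apply/ereal_infP => _ [s gs0 <-].
rewrite lee_fin leNgt; apply/negP => st.
suff : (0 < lmeas [set y | (s < `|g y|)%R])%E by rewrite gs0 ltxx.
by apply: (lmeas_nbhs_gt0 x); apply: filterS xt => y; exact: lt_trans st.
Qed.

End esssup.

Lemma Linf_wG_lt_bound {R : realType} {n} {G : set 'rV[R]_n}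
    {v : 'rV[R]_n -> R} {t : R} :
  closed G -> interior G = set0 -> continuous v ->
  (Linf_w_norm (wG G) v < t%:E)%E -> forall x, `|v x| <= t / 2.
Proof.
move=> clG iG cv vt x; rewrite leNgt; apply/negP => xt.
pose U := [set y | t / 2 < `|v y|].
have oU : open U.
  have -> : U = (fun y => `|v y|) @^-1` `]t / 2, +oo[.
    by apply/seteqP; split => y /=; rewrite in_itv /= andbT.
  apply: open_comp; last exact: rray_open.
  by move=> y _; apply: continuous_comp (cv y) _; exact: norm_continuous.
have [y [Uy Gy]] : exists y, U y /\ ~ G y.
  apply: contrapT => UG; suff : interior G x by rewrite iG.
  apply: filterS (open_nbhs_nbhs (conj oU xt)) => z Uz.
  by apply: contrapT => Gz; apply: UG; exists z.
have yW : nbhs y (U `&` ~` G).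
  by apply: open_nbhs_nbhs; split; [exact/openI/closed_openC | ].
suff : (t%:E <= Linf_w_norm (wG G) v)%E by rewrite leNgt vt.
apply: (esssup_ge_nbhs y); apply: filterS yW => z [/= Uz Gz].
move: Uz; rewrite /U /wG memNset //= normrM (@ger0_norm _ 2) //; lra.
Qed.

Lemma L2norm_ge_lmeas {R : realType} {n} (A : set 'rV[R]_n) (f : 'rV[R]_n -> R) :
  (forall x, A x -> 1 <= `|f x|) -> (lmeas A `^ 2^-1 <= L2norm f)%E.
Proof.
move=> Af; apply: gt0_ler_poweR; first by rewrite invr_ge0.
- by rewrite in_itv /= leey andbT; apply: lint_ge0 => x; rewrite lee_fin.
- by rewrite in_itv /= leey andbT; apply: lint_ge0 => x; rewrite lee_fin.
apply: le_lint => x; rewrite lee_fin // indicE.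
have [Ax|Ax] := pselect (A x); last by rewrite memNset // exprn_ge0.
by rewrite mem_set // exprn_ege1 // Af.
Qed.

Theorem theorem2p6 (R : realType) (n : nat) (G : set 'rV[R]_n) :
  compact G -> (0 < lmeas G)%E -> interior G = set0 ->
  ~ bounded_L2_approx (inLinf_w (wG G)) (Linf_w_norm (wG G)).
Proof.
move=> cG mG iG approx.
have clG : closed G := compact_closed (@norm_hausdorff _ _) cG.
pose u x : R := 4 * \1_G x.
have u_borel : borel_fun u.
  have bG : <<s [set U : set 'rV[R]_n | open U] >> G.
    rewrite -[G]setCK; apply: sigma_algebraC; apply: sub_sigma_algebra.
    exact: closed_openC.
  exact: borel_fun_comp (mulrl_measurable 4) (borel_fun_indic _ bG).
have u_L2 : inL2 u.
  split => //; apply/poweR_lty/(lint_bounded_lty 16 (compact_bounded cG)) => // x.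
  rewrite lee_fin /u indicE.
  by case: (x \in G); rewrite /= ?mulr1 ?mulr0 ?normr0 ?expr0n // ger0_norm // -natrX.
have u_norm : (Linf_w_norm (wG G) u <= 4%:E)%E.
  apply: esssup_le => x; rewrite /u /wG indicE.
  by case: (x \in G) => /=; rewrite ?mulr1 ?mulr0 ?mul0r ?normr0 ?ger0_norm.
have [uj [uj_smooth [uj_L2 uj_Linf]]] :=
  approx u u_L2 (conj u_borel (le_lt_trans u_norm (ltry _))).
pose e := (lmeas G `^ 2^-1)%E.
have near_lt5 : \forall j \near \oo, (Linf_w_norm (wG G) (uj j) < 5%:E)%E.
  apply: limn_esup_lt_near; apply: (le_lt_trans uj_Linf).
  by apply: (le_lt_trans u_norm); rewrite lte_fin ltr_nat.
have near_close : \forall j \near \oo, (L2norm (u \- uj j)%R < e)%E.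
  exact: cvg_lt_near uj_L2 (poweR_gt0 _ mG).
have [j [uj_lt5 uj_close]] := filter_ex (filterI near_lt5 near_close).
have uj_bound := Linf_wG_lt_bound clG iG ((uj_smooth j).1 0) uj_lt5.
suff : (e <= L2norm (u \- uj j)%R)%E by rewrite leNgt uj_close.
apply: L2norm_ge_lmeas => x Gx; rewrite /u /= indicE mem_set // mulr1.
have := uj_bound x; rewrite ler_norml => /andP[_ uj_le].
by apply: le_trans (ler_norm _); lra.
Qed.
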